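(* Let $\mathbf{L}\in\{\mathbf{K}_D,\mathbf{KD}_D\}$. Let $\Gamma,\Delta$ be finite multisets of formulas, $p$ a propositional variable and $a$ an agent symbol. Then there exists a formula $A$ such that: (i) $\mathsf{V}(A)\subseteq\mathsf{V}(\Gamma\cup\Delta)\setminus\{p\}$ and $\mathsf{Agt}(A)\subseteq\mathsf{Agt}(\Gamma\cup\Delta)\setminus\{a\}$; (ii) $\mathsf{G}(\mathbf{L})\vdash\Gamma,A\Rightarrow\Delta$; (iii) for all finite multisets $\Pi,\Lambda$ of formulas with $p\notin\mathsf{V}(\Pi\cup\Lambda)$ and $a\notin\mathsf{Agt}(\Pi\cup\Lambda)$: if $\mathsf{G}(\mathbf{L})\vdash\Pi,\Gamma\Rightarrow\Delta,\Lambda$, then $\mathsf{G}(\mathbf{L})\vdash\Pi\Rightarrow A,\Lambda$.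
   Context: Language: fix a finite nonempty set $\mathsf{Agt}$ of agent symbols and a countable set $\mathsf{Prop}$ of propositional variables; $\mathsf{Grp}$ is the set of nonempty subsets of $\mathsf{Agt}$. Formulas: $\alpha::=p\mid\bot\mid\alpha\wedge\alpha\mid\alpha\vee\alpha\mid\alpha\rightarrow\alpha\mid\neg\alpha\mid D_G\alpha$ with $p\in\mathsf{Prop}$, $G\in\mathsf{Grp}$. $\mathsf{V}(\cdot)$ is the set of propositional variables occurring, $\mathsf{Agt}(\cdot)$ the set of agent symbols occurring (the union of all $G$ with $D_G$ occurring); for multisets these are unions. An outmost-boxed formula is one of the form $D_G\gamma$. Sequent calculi: a sequent $\Gamma\Rightarrow\Delta$ is a pair of finite multisets of formulas; $\mathsf{G}(\mathbf{L})\vdash S$ means $S$ is the root of a finite tree built from initial sequents by the rules. $\mathsf{G}(\mathbf{K}_D)$ has initial sequents $\Gamma,p\Rightarrow p,\Delta$ ($p\in\mathsf{Prop}$) and $\bot,\Gamma\Rightarrow\Delta$; the propositional rules: $(R\wedge)$ from $\Gamma\Rightarrow\Delta,\alpha_1$ and $\Gamma\Rightarrow\Delta,\alpha_2$ infer $\Gamma\Rightarrow\Delta,\alpha_1\wedge\alpha_2$; $(L\wedge)$ from $\alpha_1,\alpha_2,\Gamma\Rightarrow\Delta$ infer $\alpha_1\wedge\alpha_2,\Gamma\Rightarrow\Delta$; $(R\vee)$ from $\Gamma\Rightarrow\Delta,\alpha_1,\alpha_2$ infer $\Gamma\Rightarrow\Delta,\alpha_1\vee\alpha_2$; $(L\vee)$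 from $\alpha_1,\Gamma\Rightarrow\Delta$ and $\alpha_2,\Gamma\Rightarrow\Delta$ infer $\alpha_1\vee\alpha_2,\Gamma\Rightarrow\Delta$; $(R\rightarrow)$ from $\alpha_1,\Gamma\Rightarrow\Delta,\alpha_2$ infer $\Gamma\Rightarrow\Delta,\alpha_1\rightarrow\alpha_2$; $(L\rightarrow)$ from $\Gamma\Rightarrow\Delta,\alpha_1$ and $\alpha_2,\Gamma\Rightarrow\Delta$ infer $\alpha_1\rightarrow\alpha_2,\Gamma\Rightarrow\Delta$; $(R\neg)$ from $\alpha,\Gamma\Rightarrow\Delta$ infer $\Gamma\Rightarrow\Delta,\neg\alpha$; $(L\neg)$ from $\Gamma\Rightarrow\Delta,\alpha$ infer $\neg\alpha,\Gamma\Rightarrow\Delta$; and $(D_K)$: from $\alpha_1,\dots,\alpha_n\Rightarrow\beta$ ($n\ge0$) infer $\Sigma,D_{G_1}\alpha_1,\dots,D_{G_n}\alpha_n\Rightarrow D_G\beta,\Omega$, provided $G_i\subseteq G$ for all $i$, $\Sigma$ consists only of propositional variables, $\bot$, and formulas $D_H\gamma$ with $H\not\subseteq G$, and $\Omega$ consists only of propositional variables, $\bot$ and outmost-boxed formulas. $\mathsf{G}(\mathbf{KD}_D)$ adds $(D_D)$: from $\Gamma\Rightarrow$ (empty succedent) with $\Gamma$ nonempty infer $\Sigma,D_{\{a\}}\Gamma\Rightarrow\Omega$ ($a\in\mathsf{Agt}$, $D_{\{a\}}\Gamma=\{D_{\{a\}}\gamma:\gamma\in\Gamma\}$), provided $\Sigma$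 consists only of propositional variables, $\bot$, and formulas $D_H\gamma$ with $H\neq\{a\}$, and $\Omega$ only of propositional variables, $\bot$ and outmost-boxed formulas. *)

From Stdlib Require Import Permutation.
From mathcomp Require Import all_boot.


Set Implicit Arguments. Unset Strict Implicit. Unset Printing Implicit Defensive.

Section Defs.
Variable Ag : finType.

Definition grp := {G : {set Ag} | G != set0}.

Inductive form : Type :=
| Var of nat
| Bot
| And of form & form
| Or of form & form
| Imp of form & form
| Neg of form
| Box of grp & form.

Fixpoint vars (f : form) : seq nat :=
  match f with
  | Var q => [:: q]
  | Bot => [::]
  | And f1 f2 | Or f1 f2 | Imp f1 f2 => vars f1 ++ vars f2
  | Neg f1 => vars f1
  | Box _ f1 => vars f1
  end.

Fixpoint agts (f : form) : {set Ag} :=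
  match f with
  | Var _ | Bot => set0
  | And f1 f2 | Or f1 f2 | Imp f1 f2 => agts f1 :|: agts f2
  | Neg f1 => agts f1
  | Box G f1 => sval G :|: agts f1
  end.

Definition varsl (s : seq form) : seq nat := flatten (map vars s).
Definition agtsl (s : seq form) : {set Ag} := \bigcup_(f <- s) agts f.

Lemma set1_nonempty (a : Ag) : [set a] != set0.
Proof. by apply/set0Pn; exists a; rewrite set11. Qed.

Definition sgrp (a : Ag) : grp := exist _ [set a] (set1_nonempty a).

Definition is_atom_or_bot (f : form) : bool :=
  match f with Var _ | Bot => true | _ => false end.
Definition omega_ok (f : form) : bool :=
  match f with Var _ | Bot | Box _ _ => true | _ => false end.
Definition sigmaK_ok (G : grp) (f : form) : bool :=
  match f with
  | Var _ | Bot => true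
  | Box H _ => ~~ (sval H \subset sval G)
  | _ => false
  end.
Definition sigmaD_ok (a : Ag) (f : form) : bool :=
  match f with
  | Var _ | Bot => true
  | Box H _ => sval H != [set a]
  | _ => false
  end.

Inductive logic := LK | LKD.

(* Sequents are pairs of lists taken up to permutation (= finite multisets). *)
Inductive deriv (L : logic) : seq form -> seq form -> Prop :=
| d_perm G D G' D' : deriv L G D -> Permutation G G' -> Permutation D D' -> deriv L G' D'
| d_id q G D : deriv L (Var q :: G) (Var q :: D)
| d_bot G D : deriv L (Bot :: G) D
| d_Rand G D a1 a2 : deriv L G (a1 :: D) -> deriv L G (a2 :: D) -> deriv L G (And a1 a2 :: D)
| d_Land G D a1 a2 : deriv L (a1 :: a2 :: G) D -> deriv L (And a1 a2 :: G) D
| d_Ror G D a1 a2 : deriv L G (a1 :: a2 :: D) -> deriv L G (Or a1 a2 :: D)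
| d_Lor G D a1 a2 : deriv L (a1 :: G) D -> deriv L (a2 :: G) D -> deriv L (Or a1 a2 :: G) D
| d_Rimp G D a1 a2 : deriv L (a1 :: G) (a2 :: D) -> deriv L G (Imp a1 a2 :: D)
| d_Limp G D a1 a2 : deriv L G (a1 :: D) -> deriv L (a2 :: G) D -> deriv L (Imp a1 a2 :: G) D
| d_Rneg G D a1 : deriv L (a1 :: G) D -> deriv L G (Neg a1 :: D)
| d_Lneg G D a1 : deriv L G (a1 :: D) -> deriv L (Neg a1 :: G) D
(* (D_K): premise alpha_1..alpha_n => beta; boxes = [(G_1,alpha_1);...;(G_n,alpha_n)] *)
| d_DK (boxes : seq (grp * form)) (G : grp) (b : form) (Sig Om : seq form) :
    deriv L (map snd boxes) [:: b] ->
    all (fun x : grp * form => sval x.1 \subset sval G) boxes ->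
    all (sigmaK_ok G) Sig ->
    all omega_ok Om ->
    deriv L (Sig ++ map (fun x => Box x.1 x.2) boxes) (Box G b :: Om)
| d_DD (a : Ag) (Gm Sig Om : seq form) :
    L = LKD ->
    Gm <> [::] ->
    deriv L Gm [::] ->
    all (sigmaD_ok a) Sig ->
    all omega_ok Om ->
    deriv L (Sig ++ map (Box (sgrp a)) Gm) Om.

End Defs.

(* Pitts-style construction. The interpolant [A(Gm; Dl)] is defined by recursion on the size of
   the sequent [Gm => Dl]. If some formula of the sequent is compound, its propositional rule is
   invertible and [A] is the conjunction of the interpolants of the premises. Otherwise every
   formula is an atom, [Bot] or a box. If the sequent is derivable, [A] is [~Bot]; if not, [A] is
   the disjunction of [~q] for atoms [q <> p] of [Gm], of [q] for atoms [q <> p] of [Dl], of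
   [~ D_g ~ A(Gm^g; )] for every group [g] of agents of [Gm] other than [a], and of
   [D_(G\a) A(Gm^G; b)] for every [D_G b] in [Dl], where [Gm^G] consists of the bodies of the
   boxes [D_H c] of [Gm] with [H] included in [G].
   Property (iii) of such an irreducible sequent is proved by induction on a derivation of
   [Pi, Gm => Dl, Lm]. A propositional rule can only act on [Pi, Lm], and an axiom or a modal
   rule, according to where its principal formulas lie, either yields a derivation of
   [Gm => Dl], which is impossible, or proves one of the disjuncts from [Pi => Lm]. This relies
   on the admissibility of weakening and on the invertibility of the propositional rules. *)

From Pilot Require Import Defs.
From Stdlib Require Import Permutation ClassicalEpsilon.
From HB Require Import structures.
From mathcomp Require Import all_boot zify.

Set Implicit Arguments. Unset Strict Implicit. Unset Printing Implicit Defensive.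

Lemma PermutationP (T : eqType) (s t : seq T) : reflect (Permutation s t) (perm_eq s t).
Proof.
apply: (iffP idP); last first.
  elim=> //= [x l l' _ h|x y l|l l' l'' _ h1 _ h2].
  - by rewrite perm_cons.
  - by apply/permP => q /=; lia.
  - exact: perm_trans h1 h2.
elim: s t => [|x s IH] t.
  by move=> /perm_size; case: t => // _; constructor.
move=> pe; have xt : x \in t by rewrite -(perm_mem pe) mem_head.
have /IH Ps : perm_eq s (rem x t) by rewrite -(perm_cons x) (perm_trans pe (perm_to_rem xt)).
apply: (Permutation_trans (l' := x :: rem x t)); first by constructor.
elim: t xt {pe Ps} => [//|y t IHt] /=.
rewrite in_cons; case: (y =P x) => [-> _|ne /= xt]; first exact: Permutation_refl.
rewrite (_ : (x == y) = false) /= in xt; last by apply/eqP => e; apply: ne.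
by apply: Permutation_trans (perm_swap _ _ _) _; constructor; apply: IHt.
Qed.

Lemma count_cons (T : eqType) (P : pred T) x (s : seq T) : count P (x :: s) = P x + count P s.
Proof. by []. Qed.

Lemma count_nil (T : eqType) (P : pred T) : count P [::] = 0.
Proof. by []. Qed.

(* Compares element counts with [lia], using the [perm_eq] hypotheses; all other hypotheses
   are cleared first, as they make [lia] very slow. *)
Ltac perm_solve := apply/permP => z;
  repeat match goal with H : is_true (perm_eq _ _) |- _ =>
    let h := fresh in have h := elimT permP H z; clear H;
    repeat rewrite ?count_cat ?count_cons ?count_nil in h end;
  repeat rewrite ?count_cat ?count_cons ?count_nil;
  repeat match goal with H : ?T |- _ =>
    match type of T with Prop =>
      match T with @eq nat _ _ => fail 1 | _ => clear H end end end;
  lia.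

Lemma perm_cons_cases (T : eqType) (x y : T) G X : perm_eq (x :: G) (y :: X) ->
  (x = y /\ perm_eq G X) \/ (exists G', perm_eq G (y :: G') /\ perm_eq X (x :: G')).
Proof.
move=> pe; case: (x =P y) => [e|ne].
  by left; split=> //; move: pe; rewrite e perm_cons.
right; have yG : y \in G.
  have : y \in x :: G by rewrite (perm_mem pe) mem_head.
  by rewrite in_cons => /orP [/eqP e|//]; case: ne.
exists (rem y G); have h := perm_to_rem yG; split=> //.
have : perm_eq (y :: X) (y :: x :: rem y G) by perm_solve.
by rewrite perm_cons.
Qed.

Section Formulas.
Variable Ag : finType.
Local Notation form := (form Ag).
Local Notation grp := (Defs.grp Ag).
Local Notation omega_ok := (@omega_ok Ag).
Local Notation boxify := (fun x : grp * form => Box x.1 x.2).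

Fixpoint eqform (f g : form) : bool :=
  match f, g with
  | Var n, Var m => n == m
  | Bot, Bot => true
  | And f1 f2, And g1 g2 | Or f1 f2, Or g1 g2 | Imp f1 f2, Imp g1 g2 => eqform f1 g1 && eqform f2 g2
  | Neg f1, Neg g1 => eqform f1 g1
  | Box G f1, Box H g1 => (G == H) && eqform f1 g1
  | _, _ => false
  end.

Lemma eqformP : Equality.axiom eqform.
Proof.
elim=> [n||f1 IH1 f2 IH2|f1 IH1 f2 IH2|f1 IH1 f2 IH2|f1 IH1|G f1 IH1]
       [m||g1 g2|g1 g2|g1 g2|g1|H g1] /=; try by constructor.
- by apply: (iffP eqP) => [->|[]].
- by apply: (iffP andP) => [[/IH1 -> /IH2 ->]|[<- <-]]; split; [apply/IH1|apply/IH2].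
- by apply: (iffP andP) => [[/IH1 -> /IH2 ->]|[<- <-]]; split; [apply/IH1|apply/IH2].
- by apply: (iffP andP) => [[/IH1 -> /IH2 ->]|[<- <-]]; split; [apply/IH1|apply/IH2].
- by apply: (iffP (IH1 g1)) => [->|[]].
- by apply: (iffP andP) => [[/eqP -> /IH1 ->]|[<- <-]]; split; [apply/eqP|apply/IH1].
Qed.

HB.instance Definition _ := hasDecEq.Build form eqformP.

Section Calculus.
Variable L : logic.

Lemma deriv_perm X Y X' Y' : deriv L X Y -> perm_eq X X' -> perm_eq Y Y' -> deriv L X' Y'.
Proof. by move=> d /PermutationP h1 /PermutationP h2; apply: d_perm d h1 h2. Qed.

Lemma deriv_perml X Y X' : deriv L X Y -> perm_eq X X' -> deriv L X' Y.
Proof. by move=> d h; apply: deriv_perm d h (perm_refl _). Qed.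

Lemma deriv_permr X Y Y' : deriv L X Y -> perm_eq Y Y' -> deriv L X Y'.
Proof. by move=> d h; apply: deriv_perm d (perm_refl _) h. Qed.

Lemma sigmaD_okE (c : Ag) : sigmaD_ok c =1 sigmaK_ok (sgrp c).
Proof.
case=> //= H f; rewrite subset1 negb_or; case: eqP => //= _.
by rewrite (svalP H).
Qed.

Lemma deriv_DD (c : Ag) (Gm Sig Om : seq form) :
  L = LKD -> Gm <> [::] -> deriv L Gm [::] ->
  all (sigmaK_ok (sgrp c)) Sig -> all omega_ok Om ->
  deriv L (Sig ++ map (Box (sgrp c)) Gm) Om.
Proof. by move=> eL nG d HS; apply: d_DD => //; rewrite (eq_all (sigmaD_okE c)). Qed.

Lemma deriv_weakenR_omega F X Y : omega_ok F -> deriv L X Y -> deriv L X (F :: Y).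
Proof.
move=> oF; elim=> {X Y}.
- move=> G D G' D' _ IH /PermutationP pG /PermutationP pD.
  by apply: deriv_perm IH pG _; rewrite perm_cons.
- by move=> q G D; apply: deriv_permr (d_id L q G (F :: D)) _; perm_solve.
- by move=> G D; apply: d_bot.
- move=> G D a1 a2 _ IH1 _ IH2.
  have h1 : deriv L G (a1 :: F :: D) by apply: deriv_permr IH1 _; perm_solve.
  have h2 : deriv L G (a2 :: F :: D) by apply: deriv_permr IH2 _; perm_solve.
  by apply: deriv_permr (d_Rand h1 h2) _; perm_solve.
- by move=> G D a1 a2 _ IH; apply: d_Land.
- move=> G D a1 a2 _ IH.
  have h : deriv L G (a1 :: a2 :: F :: D) by apply: deriv_permr IH _; perm_solve.
  by apply: deriv_permr (d_Ror h) _; perm_solve.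
- by move=> G D a1 a2 _ IH1 _ IH2; apply: d_Lor.
- move=> G D a1 a2 _ IH.
  have h : deriv L (a1 :: G) (a2 :: F :: D) by apply: deriv_permr IH _; perm_solve.
  by apply: deriv_permr (d_Rimp h) _; perm_solve.
- move=> G D a1 a2 _ IH1 _ IH2.
  have h : deriv L G (a1 :: F :: D) by apply: deriv_permr IH1 _; perm_solve.
  exact: d_Limp h IH2.
- by move=> G D a1 _ IH; apply: deriv_permr (d_Rneg IH) _; perm_solve.
- move=> G D a1 _ IH.
  have h : deriv L G (a1 :: F :: D) by apply: deriv_permr IH _; perm_solve.
  by apply: d_Lneg.
- move=> boxes G b Sig Om prem _ Hb HS HO.
  apply: deriv_permr (d_DK (Om := F :: Om) prem Hb HS _) _; first by rewrite /= oF.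
  perm_solve.
- by move=> c Gm Sig Om eL nG prem _ HS HO; apply: (d_DD (Om := F :: Om)) => //=; rewrite oF.
Qed.

(* In a [D_K] or [D_D] step the added box may have to become principal, which weakens the
   premise by its body; hence the hypothesis on [Box H f]. *)
Lemma deriv_weakenL_omega F X Y : omega_ok F ->
  (forall H f, F = Box H f -> forall X Y, deriv L X Y -> deriv L (f :: X) Y) ->
  deriv L X Y -> deriv L (F :: X) Y.
Proof.
move=> oF wkbody; elim=> {X Y}.
- move=> G D G' D' _ IH /PermutationP pG /PermutationP pD.
  by apply: deriv_perm IH _ pD; rewrite perm_cons.
- by move=> q G D; apply: deriv_perml (d_id L q (F :: G) D) _; perm_solve.
- by move=> G D; apply: deriv_perml (d_bot L (F :: G) D) _; perm_solve.
- by move=> G D a1 a2 _ IH1 _ IH2; apply: d_Rand.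
- move=> G D a1 a2 _ IH.
  have h : deriv L (a1 :: a2 :: F :: G) D by apply: deriv_perml IH _; perm_solve.
  by apply: deriv_perml (d_Land h) _; perm_solve.
- by move=> G D a1 a2 _ IH; apply: d_Ror.
- move=> G D a1 a2 _ IH1 _ IH2.
  have h1 : deriv L (a1 :: F :: G) D by apply: deriv_perml IH1 _; perm_solve.
  have h2 : deriv L (a2 :: F :: G) D by apply: deriv_perml IH2 _; perm_solve.
  by apply: deriv_perml (d_Lor h1 h2) _; perm_solve.
- move=> G D a1 a2 _ IH.
  have h : deriv L (a1 :: F :: G) (a2 :: D) by apply: deriv_perml IH _; perm_solve.
  by apply: deriv_perml (d_Rimp h) _; perm_solve.
- move=> G D a1 a2 _ IH1 _ IH2.
  have h : deriv L (a2 :: F :: G) D by apply: deriv_perml IH2 _; perm_solve.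
  by apply: deriv_perml (d_Limp IH1 h) _; perm_solve.
- move=> G D a1 _ IH.
  have h : deriv L (a1 :: F :: G) D by apply: deriv_perml IH _; perm_solve.
  by apply: deriv_perml (d_Rneg h) _; perm_solve.
- by move=> G D a1 _ IH; apply: deriv_perml (d_Lneg IH) _; perm_solve.
- move=> boxes G b Sig Om prem _ Hb HS HO.
  case: F oF wkbody => //= [q||H f] _ wkbody.
  + by apply: (d_DK (Sig := Var _ q :: Sig)).
  + by apply: (d_DK (Sig := Bot _ :: Sig)).
  + case sHG: (sval H \subset sval G); last by apply: (d_DK (Sig := Box H f :: Sig)) => //=;
      rewrite sHG.
    have h : deriv L (map snd ((H, f) :: boxes)) [:: b] by apply: wkbody prem.
    by apply: deriv_perml (d_DK h _ HS HO) _; [rewrite /= sHG|rewrite /=; perm_solve].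
- move=> c Gm Sig Om eL nG prem _ HS HO.
  case: F oF wkbody => //= [q||H f] _ wkbody.
  + by apply: (d_DD (Sig := Var _ q :: Sig)).
  + by apply: (d_DD (Sig := Bot _ :: Sig)).
  + case sHc: (sval H == [set c]); last by apply: (d_DD (Sig := Box H f :: Sig)) => //=;
      rewrite sHc.
    have -> : H = sgrp c by apply: val_inj; apply/eqP.
    have h : deriv L (f :: Gm) [::] by apply: wkbody prem.
    by apply: deriv_perml (d_DD eL _ h HS HO) _ => //=; perm_solve.
Qed.

Lemma deriv_weaken (F : form) (X Y : seq form) :
  deriv L X Y -> deriv L (F :: X) Y /\ deriv L X (F :: Y).
Proof.
elim: F X Y => [q||f1 IH1 f2 IH2|f1 IH1 f2 IH2|f1 IH1 f2 IH2|f1 IH1|H f IH] X Y d.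
- by split; [apply: deriv_weakenL_omega|apply: deriv_weakenR_omega].
- by split; [apply: deriv_weakenL_omega|apply: deriv_weakenR_omega].
- split; first by apply/d_Land/(proj1 (IH1 _ _ _))/(proj1 (IH2 _ _ d)).
  by apply: d_Rand; [apply: (proj2 (IH1 _ _ d))|apply: (proj2 (IH2 _ _ d))].
- split; first by apply: d_Lor; [apply: (proj1 (IH1 _ _ d))|apply: (proj1 (IH2 _ _ d))].
  by apply/d_Ror/(proj2 (IH1 _ _ _))/(proj2 (IH2 _ _ d)).
- split; first by apply: d_Limp; [apply: (proj2 (IH1 _ _ d))|apply: (proj1 (IH2 _ _ d))].
  by apply/d_Rimp/(proj1 (IH1 _ _ _))/(proj2 (IH2 _ _ d)).
- by split; [apply/d_Lneg/(proj2 (IH1 _ _ d))|apply/d_Rneg/(proj1 (IH1 _ _ d))].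
- split; last exact: deriv_weakenR_omega.
  by apply: deriv_weakenL_omega d => // _ _ [_ <-] X' Y' d'; case: (IH X' Y' d').
Qed.

Lemma deriv_weakenL (F : form) (X Y : seq form) : deriv L X Y -> deriv L (F :: X) Y.
Proof. by case/(deriv_weaken F). Qed.

Lemma deriv_weakenR (F : form) (X Y : seq form) : deriv L X Y -> deriv L X (F :: Y).
Proof. by case/(deriv_weaken F). Qed.

Definition compound (f : form) : bool :=
  match f with And _ _ | Or _ _ | Imp _ _ | Neg _ => true | _ => false end.

(* The premises of the left (resp. right) rule for a compound formula, each given by the
   formulas it adds to the antecedent and to the succedent. *)
Definition lpremises (f : form) : seq (seq form * seq form) :=
  match f with
  | And a b => [:: ([:: a; b], [::])]
  | Or a b => [:: ([:: a], [::]); ([:: b], [::])]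
  | Imp a b => [:: ([::], [:: a]); ([:: b], [::])]
  | Neg a => [:: ([::], [:: a])]
  | _ => [::]
  end.

Definition rpremises (f : form) : seq (seq form * seq form) :=
  match f with
  | And a b => [:: ([::], [:: a]); ([::], [:: b])]
  | Or a b => [:: ([::], [:: a; b])]
  | Imp a b => [:: ([:: a], [:: b])]
  | Neg a => [:: ([:: a], [::])]
  | _ => [::]
  end.

Lemma sigmaK_noncompound (G : grp) (F : form) : sigmaK_ok G F -> compound F = false.
Proof. by case: F. Qed.

Lemma omega_noncompound (F : form) : omega_ok F -> compound F = false.
Proof. by case: F. Qed.

Lemma deriv_lpremises X' Y : deriv L X' Y -> forall F X, perm_eq X' (F :: X) -> compound F ->
  forall l r, (l, r) \in lpremises F -> deriv L (l ++ X) (r ++ Y).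
Proof.
(* When a rule is re-applied, its permutation side goals are closed last first: the last one
   determines the formulas of the rule. *)
elim=> {X' Y}.
- move=> G D G' D' _ IH pG pD F X pe cF l r lr.
  apply: deriv_permr (IH F X _ cF l r lr) _; last by move/PermutationP: pD => pD; perm_solve.
  by move/PermutationP: pG => pG; perm_solve.
- move=> q G D F X pe cF l r lr.
  case: (perm_cons_cases pe) => [[e _]|[G' [p1 p2]]]; first by rewrite -e in cF.
  apply: deriv_perm (d_id L q (l ++ G') (r ++ D)) _ _; perm_solve.
- move=> G D F X pe cF l r lr.
  case: (perm_cons_cases pe) => [[e _]|[G' [p1 p2]]]; first by rewrite -e in cF.
  apply: deriv_perml (d_bot L (l ++ G') (r ++ D)) _; perm_solve.
- move=> G D a1 a2 _ IH1 _ IH2 F X pe cF l r lr.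
  have h1 := IH1 F X pe cF l r lr; have h2 := IH2 F X pe cF l r lr.
  by apply: deriv_permr (d_Rand (D := r ++ D) (deriv_permr h1 _) (deriv_permr h2 _)) _;
    last first; perm_solve.
- move=> G D a1 a2 d IH F X pe cF l r lr.
  case: (perm_cons_cases pe) => [[e p1]|[G' [p1 p2]]].
    move: lr; rewrite -e inE => /eqP [-> ->] /=.
    by apply: deriv_perml d _; perm_solve.
  have h1 := IH F (a1 :: a2 :: G') ltac:(perm_solve) cF l r lr.
  by apply: deriv_perml (d_Land (G := l ++ G') (deriv_perml h1 _)) _; last first; perm_solve.
- move=> G D a1 a2 _ IH F X pe cF l r lr.
  have h1 := IH F X pe cF l r lr.
  by apply: deriv_permr (d_Ror (D := r ++ D) (deriv_permr h1 _)) _; last first; perm_solve.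
- move=> G D a1 a2 d1 IH1 d2 IH2 F X pe cF l r lr.
  case: (perm_cons_cases pe) => [[e p1]|[G' [p1 p2]]].
    move: lr; rewrite -e !inE => /orP [] /eqP [-> ->] /=.
      by apply: deriv_perml d1 _; perm_solve.
    by apply: deriv_perml d2 _; perm_solve.
  have h1 := IH1 F (a1 :: G') ltac:(perm_solve) cF l r lr.
  have h2 := IH2 F (a2 :: G') ltac:(perm_solve) cF l r lr.
  by apply: deriv_perml (d_Lor (G := l ++ G') (deriv_perml h1 _) (deriv_perml h2 _)) _;
    last first; perm_solve.
- move=> G D a1 a2 _ IH F X pe cF l r lr.
  have h1 := IH F (a1 :: X) ltac:(perm_solve) cF l r lr.
  by apply: deriv_perm (d_Rimp (G := l ++ X) (D := r ++ D) (deriv_perm h1 _ _)) _ _; last first;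
    perm_solve.
- move=> G D a1 a2 d1 IH1 d2 IH2 F X pe cF l r lr.
  case: (perm_cons_cases pe) => [[e p1]|[G' [p1 p2]]].
    move: lr; rewrite -e !inE => /orP [] /eqP [-> ->] /=.
      by apply: deriv_perml d1 _; perm_solve.
    by apply: deriv_perml d2 _; perm_solve.
  have h1 := IH1 F G' ltac:(perm_solve) cF l r lr.
  have h2 := IH2 F (a2 :: G') ltac:(perm_solve) cF l r lr.
  by apply: deriv_perml (d_Limp (G := l ++ G') (D := r ++ D) (deriv_permr h1 _)
                                (deriv_perml h2 _)) _; last first; perm_solve.
- move=> G D a1 _ IH F X pe cF l r lr.
  have h1 := IH F (a1 :: X) ltac:(perm_solve) cF l r lr.
  by apply: deriv_perm (d_Rneg (G := l ++ X) (D := r ++ D) (deriv_perml h1 _)) _ _; last first;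
    perm_solve.
- move=> G D a1 d IH F X pe cF l r lr.
  case: (perm_cons_cases pe) => [[e p1]|[G' [p1 p2]]].
    move: lr; rewrite -e inE => /eqP [-> ->] /=.
    by apply: deriv_perml d _; perm_solve.
  have h1 := IH F G' ltac:(perm_solve) cF l r lr.
  by apply: deriv_perml (d_Lneg (G := l ++ G') (D := r ++ D) (deriv_permr h1 _)) _; last first;
    perm_solve.
- move=> boxes G b Sig Om _ _ _ HS _ F X pe cF.
  have : F \in Sig ++ [seq Box x.1 x.2 | x <- boxes] by rewrite (perm_mem pe) mem_head.
  by rewrite mem_cat => /orP [/(allP HS)/sigmaK_noncompound|/mapP [x _ ->]]; rewrite ?cF.
- move=> c Gm Sig Om _ _ _ _ HS _ F X pe cF.
  have : F \in Sig ++ [seq Box (sgrp c) x | x <- Gm] by rewrite (perm_mem pe) mem_head.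
  rewrite mem_cat => /orP [/(allP HS)|/mapP [x _ ->]] //.
  by rewrite sigmaD_okE => /sigmaK_noncompound; rewrite cF.
Qed.

Lemma deriv_rpremises X Y' : deriv L X Y' -> forall F Y, perm_eq Y' (F :: Y) -> compound F ->
  forall l r, (l, r) \in rpremises F -> deriv L (l ++ X) (r ++ Y).
Proof.
elim=> {X Y'}.
- move=> G D G' D' _ IH pG pD F Y pe cF l r lr.
  apply: deriv_perml (IH F Y _ cF l r lr) _; last by move/PermutationP: pG => pG; perm_solve.
  by move/PermutationP: pD => pD; perm_solve.
- move=> q G D F Y pe cF l r lr.
  case: (perm_cons_cases pe) => [[e _]|[D' [p1 p2]]]; first by rewrite -e in cF.
  apply: deriv_perm (d_id L q (l ++ G) (r ++ D')) _ _; perm_solve.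
- move=> G D F Y pe cF l r lr.
  apply: deriv_perml (d_bot L (l ++ G) (r ++ Y)) _; perm_solve.
- move=> G D a1 a2 d1 IH1 d2 IH2 F Y pe cF l r lr.
  case: (perm_cons_cases pe) => [[e p1]|[D' [p1 p2]]].
    move: lr; rewrite -e !inE => /orP [] /eqP [-> ->] /=.
      by apply: deriv_permr d1 _; perm_solve.
    by apply: deriv_permr d2 _; perm_solve.
  have h1 := IH1 F (a1 :: D') ltac:(perm_solve) cF l r lr.
  have h2 := IH2 F (a2 :: D') ltac:(perm_solve) cF l r lr.
  by apply: deriv_permr (d_Rand (G := l ++ G) (D := r ++ D') (deriv_permr h1 _)
                                (deriv_permr h2 _)) _; last first; perm_solve.
- move=> G D a1 a2 _ IH F Y pe cF l r lr.
  have h1 := IH F Y pe cF l r lr.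
  by apply: deriv_perml (d_Land (G := l ++ G) (D := r ++ Y) (deriv_perml h1 _)) _; last first;
    perm_solve.
- move=> G D a1 a2 d IH F Y pe cF l r lr.
  case: (perm_cons_cases pe) => [[e p1]|[D' [p1 p2]]].
    move: lr; rewrite -e inE => /eqP [-> ->] /=.
    by apply: deriv_permr d _; perm_solve.
  have h1 := IH F (a1 :: a2 :: D') ltac:(perm_solve) cF l r lr.
  by apply: deriv_permr (d_Ror (G := l ++ G) (D := r ++ D') (deriv_permr h1 _)) _; last first;
    perm_solve.
- move=> G D a1 a2 _ IH1 _ IH2 F Y pe cF l r lr.
  have h1 := IH1 F Y pe cF l r lr; have h2 := IH2 F Y pe cF l r lr.
  by apply: deriv_perml (d_Lor (G := l ++ G) (D := r ++ Y) (deriv_perml h1 _) (deriv_perml h2 _))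
    _; last first; perm_solve.
- move=> G D a1 a2 d IH F Y pe cF l r lr.
  case: (perm_cons_cases pe) => [[e p1]|[D' [p1 p2]]].
    move: lr; rewrite -e inE => /eqP [-> ->] /=.
    by apply: deriv_permr d _; perm_solve.
  have h1 := IH F (a2 :: D') ltac:(perm_solve) cF l r lr.
  by apply: deriv_permr (d_Rimp (G := l ++ G) (D := r ++ D') (deriv_perm h1 _ _)) _; last first;
    perm_solve.
- move=> G D a1 a2 _ IH1 _ IH2 F Y pe cF l r lr.
  have h1 := IH1 F (a1 :: Y) ltac:(perm_solve) cF l r lr.
  have h2 := IH2 F Y pe cF l r lr.
  by apply: deriv_perml (d_Limp (G := l ++ G) (D := r ++ Y) (deriv_permr h1 _) (deriv_perml h2 _))
    _; last first; perm_solve.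
- move=> G D a1 d IH F Y pe cF l r lr.
  case: (perm_cons_cases pe) => [[e p1]|[D' [p1 p2]]].
    move: lr; rewrite -e inE => /eqP [-> ->] /=.
    by apply: deriv_perm d _ _; perm_solve.
  have h1 := IH F D' ltac:(perm_solve) cF l r lr.
  by apply: deriv_permr (d_Rneg (G := l ++ G) (D := r ++ D') (deriv_perml h1 _)) _; last first;
    perm_solve.
- move=> G D a1 _ IH F Y pe cF l r lr.
  have h1 := IH F (a1 :: Y) ltac:(perm_solve) cF l r lr.
  by apply: deriv_perml (d_Lneg (G := l ++ G) (D := r ++ Y) (deriv_permr h1 _)) _; last first;
    perm_solve.
- move=> boxes G b Sig Om _ _ _ _ HO F Y pe cF.
  have : F \in Box G b :: Om by rewrite (perm_mem pe) mem_head.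
  rewrite in_cons => /orP [/eqP e|/(allP HO)/omega_noncompound]; last by rewrite cF.
  by rewrite e in cF.
- move=> c Gm Sig Om _ _ _ _ _ HO F Y pe cF.
  have : F \in Om by rewrite (perm_mem pe) mem_head.
  by move=> /(allP HO)/omega_noncompound; rewrite cF.
Qed.

Lemma deriv_of_lpremises (P : form) X Y : compound P ->
  (forall l r, (l, r) \in lpremises P -> deriv L (l ++ X) (r ++ Y)) -> deriv L (P :: X) Y.
Proof.
case: P => //= [f1 f2|f1 f2|f1 f2|f1] _ h.
- by apply: d_Land; apply: (h [:: f1; f2] [::]); rewrite inE.
- by apply: d_Lor; [apply: (h [:: f1] [::]) | apply: (h [:: f2] [::])]; rewrite !inE eqxx ?orbT.
- by apply: d_Limp; [apply: (h [::] [:: f1]) | apply: (h [:: f2] [::])]; rewrite !inE eqxx ?orbT.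
- by apply: d_Lneg; apply: (h [::] [:: f1]); rewrite inE.
Qed.

Lemma deriv_of_rpremises (P : form) X Y : compound P ->
  (forall l r, (l, r) \in rpremises P -> deriv L (l ++ X) (r ++ Y)) -> deriv L X (P :: Y).
Proof.
case: P => //= [f1 f2|f1 f2|f1 f2|f1] _ h.
- by apply: d_Rand; [apply: (h [::] [:: f1]) | apply: (h [::] [:: f2])]; rewrite !inE eqxx ?orbT.
- by apply: d_Ror; apply: (h [::] [:: f1; f2]); rewrite inE.
- by apply: d_Rimp; apply: (h [:: f1] [:: f2]); rewrite inE.
- by apply: d_Rneg; apply: (h [:: f1] [::]); rewrite inE.
Qed.

Definition Top : form := Neg (Bot _).

Fixpoint bigOr (l : seq form) : form := if l is f :: l then Or f (bigOr l) else Bot _.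
Fixpoint bigAnd (l : seq form) : form := if l is f :: l then And f (bigAnd l) else Top.

Lemma deriv_bigOrL (l : seq form) X Y :
  (forall x, x \in l -> deriv L (x :: X) Y) -> deriv L (bigOr l :: X) Y.
Proof.
elim: l => [|f l IH] h /=; first exact: d_bot.
apply: d_Lor; first by apply: h; rewrite mem_head.
by apply: IH => x hx; apply: h; rewrite in_cons hx orbT.
Qed.

Lemma deriv_bigOrR (l : seq form) x X Y :
  x \in l -> deriv L X (x :: Y) -> deriv L X (bigOr l :: Y).
Proof.
elim: l => [//|f l IH]; rewrite in_cons => /orP [/eqP <-|hx] d /=; apply: d_Ror.
  by apply: deriv_permr (deriv_weakenR (bigOr l) d) _; perm_solve.
by apply: deriv_weakenR; apply: IH.
Qed.

Lemma deriv_bigAndL (l : seq form) x X Y :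
  x \in l -> deriv L (x :: X) Y -> deriv L (bigAnd l :: X) Y.
Proof.
elim: l => [//|f l IH]; rewrite in_cons => /orP [/eqP <-|hx] d /=; apply: d_Land.
  by apply: deriv_perml (deriv_weakenL (bigAnd l) d) _; perm_solve.
by apply: deriv_weakenL; apply: IH.
Qed.

Lemma deriv_bigAndR (l : seq form) X Y :
  (forall x, x \in l -> deriv L X (x :: Y)) -> deriv L X (bigAnd l :: Y).
Proof.
elim: l => [|f l IH] h /=; first exact/d_Rneg/d_bot.
apply: d_Rand; first by apply: h; rewrite mem_head.
by apply: IH => x hx; apply: h; rewrite in_cons hx orbT.
Qed.

End Calculus.

Fixpoint fsize (f : form) : nat :=
  match f with
  | Var _ | Bot => 1
  | And f1 f2 | Or f1 f2 | Imp f1 f2 => (fsize f1 + fsize f2).+1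
  | Neg f1 | Box _ f1 => (fsize f1).+1
  end.

Definition msize (s : seq form) := sumn (map fsize s).

Lemma msize_cat (s t : seq form) : msize (s ++ t) = msize s + msize t.
Proof. by rewrite /msize map_cat sumn_cat. Qed.

Lemma msize_perm (s t : seq form) : perm_eq s t -> msize s = msize t.
Proof. by move=> h; apply/perm_sumn/perm_map. Qed.

Lemma msize_mem (f : form) l : f \in l -> fsize f <= msize l.
Proof. by elim: l => //= g l IH; rewrite in_cons => /orP [/eqP ->|/IH]; rewrite /msize /=; lia. Qed.

Lemma msize_premises (P : form) l r :
  (l, r) \in lpremises P ++ rpremises P -> msize l + msize r < fsize P.
Proof.
case: P => //= [f1 f2|f1 f2|f1 f2|f1]; rewrite !inE; do ?case/orP; case/eqP => -> ->;
  rewrite /msize /=; lia.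
Qed.

(* [unbox G l] is [l^G]: the part of [l] that a [D_K] step with principal group [G] unboxes. *)
Definition box_within (G : grp) (f : form) : option (grp * form) :=
  if f is Box H g then if sval H \subset sval G then Some (H, g) else None else None.

Definition boxes_within (G : grp) (l : seq form) := pmap (box_within G) l.
Definition unbox (G : grp) (l : seq form) := map snd (boxes_within G l).
Definition nonboxes (G : grp) (l : seq form) := [seq f <- l | box_within G f == None].

Lemma perm_boxes_within (G : grp) (l : seq form) :
  perm_eq l (nonboxes G l ++ map boxify (boxes_within G l)).
Proof.
elim: l => //= f l IH; rewrite /boxes_within /=.
case: f => /= [q||f1 f2|f1 f2|f1 f2|f1|H f1]; try by rewrite perm_cons.
case: (sval H \subset sval G) => /=; last by rewrite perm_cons.
by move: IH; rewrite /boxes_within => IH; perm_solve.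
Qed.

Lemma boxes_within_sub (G : grp) (l : seq form) :
  all (fun x : grp * form => sval x.1 \subset sval G) (boxes_within G l).
Proof.
elim: l => //= f l IH; rewrite /boxes_within /=; case: f => //= H f.
by case h: (sval H \subset sval G) => //=; rewrite h.
Qed.

Lemma mem_boxes_within (G : grp) x (l : seq form) :
  x \in boxes_within G l -> Box x.1 x.2 \in l.
Proof.
rewrite /boxes_within mem_pmap => /mapP [f hf]; case: f hf => //= H g hf.
by case: ifP => // _ [->].
Qed.

Lemma unbox_cat (G : grp) (X Y : seq form) : unbox G (X ++ Y) = unbox G X ++ unbox G Y.
Proof. by rewrite /unbox /boxes_within pmap_cat map_cat. Qed.

Lemma perm_unbox (G : grp) (X Y : seq form) : perm_eq X Y -> perm_eq (unbox G X) (unbox G Y).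
Proof. by move=> h; apply/perm_map/perm_pmap. Qed.

Lemma unbox_DK (G : grp) Sig boxes : all (sigmaK_ok G) Sig ->
  all (fun x : grp * form => sval x.1 \subset sval G) boxes ->
  unbox G (Sig ++ map boxify boxes) = map snd boxes.
Proof.
move=> HS Hb; rewrite /unbox /boxes_within pmap_cat; congr (map snd _).
have -> : pmap (box_within G) Sig = [::].
  elim: Sig HS => //= f Sig IH /andP [h1 h2]; rewrite IH //.
  by case: f h1 => //= H f /negbTE ->.
by elim: boxes Hb => //= [[H f] boxes] IH /andP [/= -> /IH ->].
Qed.

Lemma nonboxes_sigmaK (G : grp) Sig boxes (Y : seq form) :
  all (sigmaK_ok G) Sig -> {subset Y <= Sig ++ map boxify boxes} ->
  all (fun x : grp * form => sval x.1 \subset sval G) boxes ->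
  all (sigmaK_ok G) (nonboxes G Y).
Proof.
move=> HS sub Hb; apply/allP => f; rewrite mem_filter => /andP [/eqP hf /sub].
rewrite mem_cat => /orP [/(allP HS)//|/mapP [[H g] hx ef]].
by move: hf; rewrite ef /= (allP Hb _ hx).
Qed.

Lemma nonboxes_sigmaD (c : Ag) Sig (Gm Y : seq form) :
  all (sigmaK_ok (sgrp c)) Sig -> {subset Y <= Sig ++ map (Box (sgrp c)) Gm} ->
  all (sigmaK_ok (sgrp c)) (nonboxes (sgrp c) Y).
Proof.
move=> HS sub; apply: (nonboxes_sigmaK (boxes := [seq (sgrp c, f) | f <- Gm]) HS).
  by move=> f /sub; rewrite -map_comp.
by rewrite all_map; apply/allP => f _ /=.
Qed.

Lemma nonboxes_omega (G : grp) (l : seq form) : all omega_ok l -> all (sigmaK_ok G) (nonboxes G l).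
Proof.
elim: l => //= f l IH /andP [h1 h2]; case: f h1 => //= [q||H f] _; rewrite ?IH //.
by case: (boolP (sval H \subset sval G)) => sHG /=; rewrite ?sHG ?IH.
Qed.

Lemma sigmaK_ok_sub (G' G : grp) (f : form) :
  sval G' \subset sval G -> sigmaK_ok G f -> sigmaK_ok G' f.
Proof. by move=> s; case: f => //= H f; apply: contra => h; apply: subset_trans h s. Qed.

Lemma boxes_within_sgrp (c : Ag) (l : seq form) :
  boxes_within (sgrp c) l = [seq (sgrp c, f) | f <- unbox (sgrp c) l].
Proof.
rewrite /unbox -map_comp; have := boxes_within_sub (sgrp c) l.
elim: (boxes_within _ _) => //= [[H f] bs] IH /andP [/= sH /IH {1}->].
have -> // : H = sgrp c.
by apply: val_inj; move: sH; rewrite subset1 (negbTE (svalP H)) orbF => /eqP.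
Qed.

Lemma perm_boxes_sgrp (c : Ag) (l : seq form) :
  perm_eq l (nonboxes (sgrp c) l ++ map (Box (sgrp c)) (unbox (sgrp c) l)).
Proof. by have := perm_boxes_within (sgrp c) l; rewrite boxes_within_sgrp -map_comp. Qed.

Lemma unbox_DD (c : Ag) Sig (Gm : seq form) : all (sigmaK_ok (sgrp c)) Sig ->
  unbox (sgrp c) (Sig ++ map (Box (sgrp c)) Gm) = Gm.
Proof.
move=> HS; have -> : map (Box (sgrp c)) Gm = map boxify [seq (sgrp c, f) | f <- Gm].
  by rewrite -map_comp.
by rewrite unbox_DK // ?all_map -?map_comp ?map_id //; apply/allP => f _ /=.
Qed.

Lemma msize_unbox (G : grp) (l : seq form) : msize (unbox G l) + size l <= msize l.
Proof.
elim: l => //= f l IH; rewrite /unbox /boxes_within /=.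
case: f => /= [q||f1 f2|f1 f2|f1 f2|f1|H f1]; rewrite /msize /=; move: IH;
  rewrite /msize /unbox /boxes_within; try lia.
by case: (sval H \subset sval G) => /=; lia.
Qed.

Lemma mem_varsl q (s : seq form) : (q \in varsl s) = has (fun f => q \in vars f) s.
Proof. by elim: s => //= f s IH; rewrite /varsl /= mem_cat -IH. Qed.

Lemma in_agtsl x (s : seq form) : (x \in agtsl s) = has (fun f => x \in agts f) s.
Proof.
elim: s => [|f s IH]; first by rewrite /agtsl big_nil in_set0.
by rewrite /agtsl big_cons in_setU /= -IH.
Qed.

Lemma varsl_cat (s t : seq form) : varsl (s ++ t) = varsl s ++ varsl t.
Proof. by rewrite /varsl map_cat flatten_cat. Qed.

Lemma agtsl_cat (s t : seq form) : agtsl (s ++ t) = agtsl s :|: agtsl t.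
Proof. by rewrite /agtsl big_cat. Qed.

Definition lang_sub (Y X : seq form) := {subset varsl Y <= varsl X} /\ agtsl Y \subset agtsl X.

Lemma lang_mem (f : form) X : f \in X -> {subset vars f <= varsl X} /\ agts f \subset agtsl X.
Proof.
move=> fX; split=> [q qf|]; first by rewrite mem_varsl; apply/hasP; exists f.
by apply/subsetP => x xf; rewrite in_agtsl; apply/hasP; exists f.
Qed.

Lemma lang_subP (Y X : seq form) :
  (forall f, f \in Y -> {subset vars f <= varsl X} /\ agts f \subset agtsl X) -> lang_sub Y X.
Proof.
move=> h; split=> [q|]; first by rewrite mem_varsl => /hasP [f /h [+ _]]; apply.
by apply/subsetP => x; rewrite in_agtsl => /hasP [f /h [_ /subsetP]]; apply.
Qed.

Lemma lang_sub0 (X : seq form) : lang_sub [::] X.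
Proof. by apply: lang_subP. Qed.

Lemma lang_sub_trans (Z Y X : seq form) : lang_sub Z Y -> lang_sub Y X -> lang_sub Z X.
Proof. by move=> [v1 a1] [v2 a2]; split; [move=> q /v1 /v2|apply: subset_trans a1 a2]. Qed.

Lemma lang_sub_perm (Y X : seq form) : perm_eq Y X -> lang_sub Y X.
Proof. by move=> pYX; apply: lang_subP => f; rewrite (perm_mem pYX) => /lang_mem. Qed.

Lemma box_agts (H : grp) (g : form) X : Box H g \in X -> sval H \subset agtsl X.
Proof. by case/lang_mem => _; rewrite /= subUset => /andP []. Qed.

Lemma lang_sub_box (H : grp) (g : form) X : Box H g \in X -> lang_sub [:: g] X.
Proof.
case/lang_mem => /= sv; rewrite subUset => /andP [_ sa].
by apply: lang_subP => f; rewrite inE => /eqP ->.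
Qed.

Lemma lang_sub_unbox (G : grp) (X : seq form) : lang_sub (unbox G X) X.
Proof.
apply: lang_subP => _ /mapP [[H g] /mem_boxes_within /lang_mem /= [sv sa] ->].
by split=> //; apply: subset_trans sa; apply: subsetUr.
Qed.

Lemma lang_sub_cat (A B C D : seq form) :
  lang_sub A C -> lang_sub B D -> lang_sub (A ++ B) (C ++ D).
Proof.
move=> [v1 a1] [v2 a2]; split; last by rewrite !agtsl_cat setUSS.
by move=> q; rewrite !varsl_cat !mem_cat => /orP [/v1|/v2] ->; rewrite ?orbT.
Qed.

Lemma lang_sub_premises (P : form) l r :
  (l, r) \in lpremises P ++ rpremises P -> lang_sub (l ++ r) [:: P].
Proof.
case: P => //= [f1 f2|f1 f2|f1 f2|f1]; rewrite !inE; do ?case/orP; case/eqP => -> ->;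
  apply: lang_subP => f; rewrite !inE; do ?case/orP; move/eqP => ->;
  rewrite /varsl /agtsl /= big_seq1 cats0; (split; [move=> q|apply/subsetP => q]);
  by rewrite ?mem_cat ?in_setU => ->; rewrite ?orbT.
Qed.

Lemma lang_sub_premises_cat (P : form) l r Gm Dl : (l, r) \in lpremises P ++ rpremises P ->
  lang_sub ((l ++ Gm) ++ (r ++ Dl)) (P :: Gm ++ Dl).
Proof.
move=> lr; apply: (lang_sub_trans (Y := (l ++ r) ++ (Gm ++ Dl))).
  by apply: lang_sub_perm; perm_solve.
exact: lang_sub_cat (lang_sub_premises lr) (lang_sub_perm (perm_refl _)).
Qed.

Section Interpolation.
Variables (L : logic) (p : nat) (a : Ag).

Definition fresh (f : form) : bool := (p \notin vars f) && (a \notin agts f).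

Lemma fresh_all (s : seq form) : (p \notin varsl s) && (a \notin agtsl s) = all fresh s.
Proof.
rewrite mem_varsl in_agtsl; elim: s => //= f s <-.
by rewrite /fresh !negb_or; case: (p \in vars f); case: (a \in agts f); case: (has _ s);
  case: (has _ s).
Qed.

Lemma fresh_Box (G : grp) (f : form) : fresh (Box G f) = (a \notin sval G) && fresh f.
Proof. by rewrite /fresh /= in_setU negb_or andbCA. Qed.

Lemma fresh_lang_sub (Y X : seq form) : lang_sub Y X -> all fresh X -> all fresh Y.
Proof.
move=> [sv sa]; rewrite -!fresh_all => /andP [pX aX].
by rewrite (contra (@sv p) pX) (contra (subsetP sa a) aX).
Qed.

Lemma fresh_unbox (G : grp) (l : seq form) : all fresh l -> all fresh (unbox G l).
Proof. exact/fresh_lang_sub/lang_sub_unbox. Qed.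

(* A fresh box [Box H f] has [a \notin H], so [H] lies below [G] iff it lies below [G :\ a]. *)
Lemma box_within_fresh (G' G : grp) (l : seq form) : all fresh l -> sval G' = sval G :\ a ->
  {in l, box_within G' =1 box_within G}.
Proof.
move=> fr e f /(allP fr); case: f => //= H f.
rewrite fresh_Box e => /andP [aH _]; congr (if _ then _ else _).
apply/idP/idP => [sHG|sHG]; first by apply: subset_trans sHG (subD1set _ _).
by apply/subsetP => x hx; rewrite in_setD1 (subsetP sHG _ hx) andbT; apply: contraNneq aH => <-.
Qed.

Lemma boxes_within_fresh_nil (G : grp) (l : seq form) : all fresh l -> sval G :\ a = set0 ->
  boxes_within G l = [::].
Proof.
move=> fr e; elim: l fr => //= f l IH /andP [h1 /IH]; rewrite /boxes_within /= => ->.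
case: f h1 => //= H f; rewrite fresh_Box => /andP [aH _].
case: ifP => // sHG; have /set0Pn [x hx] := svalP H.
have : x \in sval G :\ a by rewrite in_setD1 (subsetP sHG _ hx) andbT; apply: contraNneq aH => <-.
by rewrite e in_set0.
Qed.

Definition in_lang (X : seq form) (F : form) : bool :=
  all (fun q => (q \in varsl X) && (q != p)) (vars F) && (agts F \subset agtsl X :\ a).

Lemma in_lang_mono (Y X : seq form) F : lang_sub Y X -> in_lang Y F -> in_lang X F.
Proof.
move=> [sv sa] /andP [h1 h2]; apply/andP; split.
  by apply/allP => q /(allP h1) /andP [/sv -> ->].
by apply: subset_trans h2 _; apply: setSD.
Qed.

Lemma in_lang_Var X q : q \in varsl X -> q != p -> in_lang X (Var _ q).
Proof. by move=> h1 h2; rewrite /in_lang /= h1 h2 sub0set. Qed.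

Lemma in_lang_Box X (G : grp) F : sval G \subset agtsl X :\ a -> in_lang X F -> in_lang X (Box G F).
Proof. by move=> h /andP [h1 h2]; rewrite /in_lang /= subUset h h1 h2. Qed.

Lemma in_lang_Top X : in_lang X Top.
Proof. by rewrite /in_lang /= sub0set. Qed.

Lemma in_lang_And X F1 F2 : in_lang X F1 -> in_lang X F2 -> in_lang X (And F1 F2).
Proof. by move=> /andP [h1 h2] /andP [h3 h4]; rewrite /in_lang /= all_cat subUset h1 h2 h3 h4. Qed.

Lemma in_lang_Or X F1 F2 : in_lang X F1 -> in_lang X F2 -> in_lang X (Or F1 F2).
Proof. exact: in_lang_And. Qed.

Lemma in_lang_bigAnd X l : (forall x, x \in l -> in_lang X x) -> in_lang X (bigAnd l).
Proof.
elim: l => [|f l IH] h /=; first exact: in_lang_Top.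
by apply: in_lang_And; [apply: h; rewrite mem_head|apply: IH => x hx; apply: h;
  rewrite in_cons hx orbT].
Qed.

Lemma in_lang_bigOr X l : (forall x, x \in l -> in_lang X x) -> in_lang X (bigOr l).
Proof.
elim: l => [|f l IH] h /=; first by rewrite /in_lang /= sub0set.
by apply: in_lang_Or; [apply: h; rewrite mem_head|apply: IH => x hx; apply: h;
  rewrite in_cons hx orbT].
Qed.

Fixpoint pick_compound (l : seq form) : option (form * seq form) :=
  match l with
  | [::] => None
  | f :: l' => if compound f then Some (f, l')
               else if pick_compound l' is Some (g, r) then Some (g, f :: r) else None
  end.

Lemma pick_compound_some l f r :
  pick_compound l = Some (f, r) -> perm_eq l (f :: r) /\ compound f.
Proof.
elim: l f r => //= g l IH f r; case: ifP => [cg [<- <-] //|_].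
case e: (pick_compound l) => [[h r']|] // [<- <-].
by have [p1 c1] := IH _ _ e; split=> //; perm_solve.
Qed.

Lemma pick_compound_none l : pick_compound l = None -> all omega_ok l.
Proof.
elim: l => //= g l IH; case: ifP => // cg.
case: (pick_compound l) IH => [[h r']|] // -> // _; rewrite andbT.
by case: g cg.
Qed.

Lemma fresh_premises (P : form) l r :
  (l, r) \in lpremises P ++ rpremises P -> fresh P -> all fresh (l ++ r).
Proof. by move=> lr frP; apply: fresh_lang_sub (lang_sub_premises lr) _; rewrite /= frP. Qed.

Definition uniform_interpolant (Gm Dl : seq form) (F : form) : Prop :=
  [/\ in_lang (Gm ++ Dl) F, deriv L (Gm ++ [:: F]) Dl &
      forall Pi Lm, all fresh (Pi ++ Lm) -> deriv L (Pi ++ Gm) (Dl ++ Lm) -> deriv L Pi (F :: Lm)].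

Section InvertibleSteps.
Variables (J : seq form -> seq form -> form) (P : form).
Hypothesis cP : compound P.

Lemma lpremises_interpolant Gm Dl :
  (forall l r, (l, r) \in lpremises P ->
     uniform_interpolant (l ++ Gm) (r ++ Dl) (J (l ++ Gm) (r ++ Dl))) ->
  uniform_interpolant (P :: Gm) Dl (bigAnd [seq J (lr.1 ++ Gm) (lr.2 ++ Dl) | lr <- lpremises P]).
Proof.
move=> IH; split.
- apply: in_lang_bigAnd => _ /mapP [[l r] lr ->]; have [i _ _] := IH l r lr.
  by apply: in_lang_mono i; apply: lang_sub_premises_cat; rewrite mem_cat lr.
- set Fs := map _ _.
  apply: deriv_perml (_ : deriv L (P :: bigAnd Fs :: Gm) Dl) _; last by perm_solve.
  apply: deriv_of_lpremises cP _ => l r lr; have [_ d _] := IH l r lr.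
  have d' : deriv L (J (l ++ Gm) (r ++ Dl) :: l ++ Gm) (r ++ Dl) by apply: deriv_perml d _;
    perm_solve.
  have JFs : J (l ++ Gm) (r ++ Dl) \in Fs by apply: (map_f _ lr).
  by apply: deriv_perml (deriv_bigAndL JFs d') _; perm_solve.
- move=> Pi Lm fr d; apply: deriv_bigAndR => _ /mapP [[l r] lr ->].
  have [_ _ e] := IH l r lr; apply: e fr _.
  by apply: deriv_perm (deriv_lpremises d (X := Pi ++ Gm) _ cP lr) _ _; perm_solve.
Qed.

Lemma rpremises_interpolant Gm Dl :
  (forall l r, (l, r) \in rpremises P ->
     uniform_interpolant (l ++ Gm) (r ++ Dl) (J (l ++ Gm) (r ++ Dl))) ->
  uniform_interpolant Gm (P :: Dl) (bigAnd [seq J (lr.1 ++ Gm) (lr.2 ++ Dl) | lr <- rpremises P]).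
Proof.
move=> IH; split.
- apply: in_lang_bigAnd => _ /mapP [[l r] lr ->]; have [i _ _] := IH l r lr.
  have lr' : (l, r) \in lpremises P ++ rpremises P by rewrite mem_cat lr orbT.
  apply: in_lang_mono i; apply: lang_sub_trans (lang_sub_premises_cat Gm Dl lr') _.
  by apply: lang_sub_perm; perm_solve.
- set Fs := map _ _.
  apply: deriv_perml (_ : deriv L (bigAnd Fs :: Gm) (P :: Dl)) _; last by perm_solve.
  apply: deriv_of_rpremises cP _ => l r lr; have [_ d _] := IH l r lr.
  have d' : deriv L (J (l ++ Gm) (r ++ Dl) :: l ++ Gm) (r ++ Dl) by apply: deriv_perml d _;
    perm_solve.
  have JFs : J (l ++ Gm) (r ++ Dl) \in Fs by apply: (map_f _ lr).
  by apply: deriv_perml (deriv_bigAndL JFs d') _; perm_solve.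
- move=> Pi Lm fr d; apply: deriv_bigAndR => _ /mapP [[l r] lr ->].
  have [_ _ e] := IH l r lr; apply: e fr _.
  by apply: deriv_perm (deriv_rpremises d (Y := Dl ++ Lm) _ cP lr) _ _; perm_solve.
Qed.

End InvertibleSteps.

Definition atoms (l : seq form) : seq nat :=
  pmap (fun f : form => if f is Var q then Some q else None) l.

Lemma mem_atoms q (l : seq form) : (q \in atoms l) = (Var _ q \in l).
Proof.
elim: l => //= f l IH; rewrite in_cons -IH.
by case: f => //= [q'|||||]; rewrite in_cons.
Qed.

Definition groups : seq grp := pmap insub (enum {set Ag}).

Lemma mem_groups (g : grp) : g \in groups.
Proof. by rewrite /groups mem_pmap_sub mem_enum. Qed.

Definition irreducible_disjuncts (J : seq form -> seq form -> form) (Gm Dl : seq form) : seq form :=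
  [seq Neg (Var _ q) | q <- atoms Gm & q != p] ++
  [seq Var _ q | q <- atoms Dl & q != p] ++
  [seq Neg (Box g (Neg (J (unbox g Gm) [::])))
     | g : grp <- groups & sval g \subset agtsl Gm :\ a] ++
  pmap (fun f => if f is Box G b
                 then omap (fun g' => Box g' (J (unbox G Gm) [:: b])) (insub (sval G :\ a))
                 else None) Dl.

Section Irreducible.
Variables (J : seq form -> seq form -> form) (Gm Dl : seq form).
Hypotheses (hG : all omega_ok Gm) (hD : all omega_ok Dl) (nGD : ~ deriv L Gm Dl).
Hypothesis IHg : forall g : grp, sval g \subset agtsl Gm :\ a ->
  uniform_interpolant (unbox g Gm) [::] (J (unbox g Gm) [::]).
Hypothesis IHb : forall (G : grp) b, Box G b \in Dl ->
  uniform_interpolant (unbox G Gm) [:: b] (J (unbox G Gm) [:: b]).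

Local Notation disjuncts := (irreducible_disjuncts J Gm Dl).

Lemma NegVar_disjunct q : Var _ q \in Gm -> q != p -> Neg (Var _ q) \in disjuncts.
Proof. by move=> h hq;
  rewrite !mem_cat (map_f (fun q => Neg (Var _ q))) // mem_filter hq mem_atoms. Qed.

Lemma Var_disjunct q : Var _ q \in Dl -> q != p -> Var _ q \in disjuncts.
Proof. by move=> h hq; rewrite !mem_cat (map_f (Var _)) ?orbT // mem_filter hq mem_atoms. Qed.

Lemma diamond_disjunct (g : grp) : sval g \subset agtsl Gm :\ a ->
  Neg (Box g (Neg (J (unbox g Gm) [::]))) \in disjuncts.
Proof.
move=> h; rewrite !mem_cat (map_f (fun g => Neg (Box g (Neg (J (unbox g Gm) [::]))))) ?orbT //.
by rewrite mem_filter h mem_groups.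
Qed.

Lemma Box_disjunct (G g' : grp) b : Box G b \in Dl -> sval g' = sval G :\ a ->
  Box g' (J (unbox G Gm) [:: b]) \in disjuncts.
Proof.
move=> h e; rewrite !mem_cat mem_pmap; apply/orP; right; apply/orP; right; apply/orP; right.
by apply/mapP; exists (Box G b) => //=; rewrite -e valK.
Qed.

Lemma disjunctP x : x \in disjuncts ->
  [\/ exists2 q, x = Neg (Var _ q) & (Var _ q \in Gm) && (q != p),
      exists2 q, x = Var _ q & (Var _ q \in Dl) && (q != p),
      exists2 g : grp, x = Neg (Box g (Neg (J (unbox g Gm) [::]))) & sval g \subset agtsl Gm :\ a |
      exists (G g' : grp) b, [/\ x = Box g' (J (unbox G Gm) [:: b]), Box G b \in Dl & sval g' =
        sval G :\ a]].
Proof.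
rewrite !mem_cat => /orP [|/orP [|/orP []]].
- by move=> /mapP [q]; rewrite mem_filter mem_atoms andbC => hq ->; apply: Or41; exists q.
- by move=> /mapP [q]; rewrite mem_filter mem_atoms andbC => hq ->; apply: Or42; exists q.
- by move=> /mapP [g]; rewrite mem_filter => /andP [hg _] ->; apply: Or43; exists g.
- rewrite mem_pmap => /mapP [f hf]; case: f hf => // G b hf.
  by case: insubP => //= g' _ eg [->]; apply: Or44; exists G, g', b.
Qed.

Lemma in_lang_disjunct x : x \in disjuncts -> in_lang (Gm ++ Dl) x.
Proof.
have var_lang q : Var _ q \in Gm ++ Dl -> q \in varsl (Gm ++ Dl).
  by case/lang_mem => + _; apply; rewrite inE.
case/disjunctP.
- by move=> [q -> /andP [h hq]]; apply: in_lang_Var hq; apply: var_lang; rewrite mem_cat h.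
- by move=> [q -> /andP [h hq]]; apply: in_lang_Var hq; apply: var_lang; rewrite mem_cat h orbT.
- move=> [g -> hg]; have [i1 _ _] := IHg hg.
  have sub : lang_sub (unbox g Gm ++ [::]) (Gm ++ Dl) by apply: lang_sub_cat (lang_sub_unbox _ _)
    (lang_sub0 _).
  apply: in_lang_Box (in_lang_mono sub i1).
  by apply: subset_trans hg _; apply: setSD; rewrite agtsl_cat subsetUl.
- move=> [G [g' [b [-> hb e]]]]; have [i1 _ _] := IHb hb.
  have sub : lang_sub (unbox G Gm ++ [:: b]) (Gm ++ Dl).
    exact: lang_sub_cat (lang_sub_unbox _ _) (lang_sub_box hb).
  apply: in_lang_Box (in_lang_mono sub i1).
  by rewrite e; apply: setSD; rewrite agtsl_cat; apply: subset_trans (box_agts hb) (subsetUr _ _).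
Qed.

Lemma deriv_disjunct x : x \in disjuncts -> deriv L (x :: Gm) Dl.
Proof.
case/disjunctP.
- move=> [q -> /andP [h _]]; apply: d_Lneg.
  by apply: deriv_perml (d_id L q (rem (Var _ q) Gm) Dl) _; rewrite perm_sym perm_to_rem.
- move=> [q -> /andP [h _]].
  by apply: deriv_permr (d_id L q Gm (rem (Var _ q) Dl)) _; rewrite perm_sym perm_to_rem.
- move=> [g -> hg]; have [_ d1 _] := IHg hg; apply: d_Lneg.
  have prem : deriv L (unbox g Gm) [:: Neg (J (unbox g Gm) [::])].
    by apply: d_Rneg; apply: deriv_perml d1 _; perm_solve.
  apply: deriv_perml (d_DK (Sig := nonboxes g Gm) (Om := Dl) prem (boxes_within_sub g Gm)
    (nonboxes_omega g hG) hD) _.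
  by rewrite perm_sym perm_boxes_within.
- move=> [G [g' [b [-> hb e]]]]; have [_ d1 _] := IHb hb.
  have prem : deriv L (J (unbox G Gm) [:: b] :: unbox G Gm) [:: b] by apply: deriv_perml d1 _;
    perm_solve.
  set boxes := (g', J (unbox G Gm) [:: b]) :: boxes_within G Gm.
  have Hb : all (fun x : grp * form => sval x.1 \subset sval G) boxes.
    by rewrite /= e subD1set boxes_within_sub.
  have pDl := perm_to_rem hb.
  have HO : all omega_ok (rem (Box G b) Dl) by move: hD; rewrite (perm_all _ pDl) => /andP [].
  apply: deriv_perm (d_DK (boxes := boxes) (Sig := nonboxes G Gm) prem Hb (nonboxes_omega G hG)
    HO) _ _;
    last by rewrite perm_sym.
  by have := perm_boxes_within G Gm; rewrite /= => h; perm_solve.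
Qed.

Definition split_interpolated (X Y : seq form) : Prop :=
  forall Pi Lm, perm_eq X (Pi ++ Gm) -> perm_eq Y (Dl ++ Lm) -> all fresh (Pi ++ Lm) ->
    deriv L Pi (bigOr disjuncts :: Lm).

Lemma split_interpolated_lpremises (P : form) G0 D0 : compound P ->
  (forall l r, (l, r) \in lpremises P -> split_interpolated (l ++ G0) (r ++ D0)) ->
  split_interpolated (P :: G0) D0.
Proof.
move=> cP IH Pi Lm pX pY fr.
have : P \in Pi ++ Gm by rewrite -(perm_mem pX) mem_head.
rewrite mem_cat => /orP [PPi|/(allP hG)/omega_noncompound]; last by rewrite cP.
have pPi := perm_to_rem PPi; move: (rem P Pi) pPi => Pi' pPi.
have : all fresh (P :: Pi' ++ Lm) by rewrite -(perm_all _ (_ : perm_eq (Pi ++ Lm) _)) //;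
  perm_solve.
move=> /= /andP [frP fr'].
apply: deriv_perml (_ : deriv L (P :: Pi') (bigOr disjuncts :: Lm)) _; last by perm_solve.
apply: deriv_of_lpremises cP _ => l r lr.
have fr2 : all fresh ((l ++ Pi') ++ r ++ Lm).
  rewrite (perm_all _ (_ : perm_eq _ ((l ++ r) ++ (Pi' ++ Lm)))); last by perm_solve.
  by rewrite all_cat fr' (fresh_premises _ frP) // mem_cat lr.
have h := IH l r lr (l ++ Pi') (r ++ Lm) ltac:(perm_solve) ltac:(perm_solve) fr2.
by apply: deriv_permr h _; perm_solve.
Qed.

Lemma split_interpolated_rpremises (P : form) G0 D0 : compound P ->
  (forall l r, (l, r) \in rpremises P -> split_interpolated (l ++ G0) (r ++ D0)) ->
  split_interpolated G0 (P :: D0).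
Proof.
move=> cP IH Pi Lm pX pY fr.
have : P \in Dl ++ Lm by rewrite -(perm_mem pY) mem_head.
rewrite mem_cat => /orP [/(allP hD)/omega_noncompound|PLm]; first by rewrite cP.
have pLm := perm_to_rem PLm; move: (rem P Lm) pLm => Lm' pLm.
have : all fresh (P :: Pi ++ Lm') by rewrite -(perm_all _ (_ : perm_eq (Pi ++ Lm) _)) //;
  perm_solve.
move=> /= /andP [frP fr'].
apply: deriv_permr (_ : deriv L Pi (P :: bigOr disjuncts :: Lm')) _; last by perm_solve.
apply: deriv_of_rpremises cP _ => l r lr.
have fr2 : all fresh ((l ++ Pi) ++ r ++ Lm').
  rewrite (perm_all _ (_ : perm_eq _ ((l ++ r) ++ (Pi ++ Lm')))); last by perm_solve.
  by rewrite all_cat fr' (fresh_premises _ frP) // mem_cat lr orbT.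
have h := IH l r lr (l ++ Pi) (r ++ Lm') ltac:(perm_solve) ltac:(perm_solve) fr2.
by apply: deriv_permr h _; perm_solve.
Qed.

Lemma split_interpolated_id q G0 D0 : split_interpolated (Var _ q :: G0) (Var _ q :: D0).
Proof.
move=> Pi Lm pX pY fr.
have : Var _ q \in Pi ++ Gm by rewrite -(perm_mem pX) mem_head.
have : Var _ q \in Dl ++ Lm by rewrite -(perm_mem pY) mem_head.
have qp : Var _ q \in Pi ++ Lm -> q != p.
  by move=> /(allP fr); rewrite /fresh /= inE eq_sym => /andP [].
rewrite !mem_cat => /orP [qD|qL] /orP [qP|qG].
- apply: deriv_bigOrR (Var_disjunct qD (qp _)) _; first by rewrite mem_cat qP.
  by apply: deriv_perml (d_id L q (rem (Var _ q) Pi) Lm) _; rewrite perm_sym perm_to_rem.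
- exfalso; apply: nGD; have e1 := perm_to_rem qD; have e2 := perm_to_rem qG.
  by apply: deriv_perm (d_id L q (rem (Var _ q) Gm) (rem (Var _ q) Dl)) _ _; perm_solve.
- have e1 := perm_to_rem qP; have e2 := perm_to_rem qL.
  by apply: deriv_perm (d_id L q (rem (Var _ q) Pi) (bigOr disjuncts :: rem (Var _ q) Lm)) _ _;
    perm_solve.
- apply: deriv_bigOrR (NegVar_disjunct qG (qp _)) _; first by rewrite mem_cat qL orbT.
  by apply: d_Rneg; apply: deriv_permr (d_id L q Pi (rem (Var _ q) Lm)) _;
    rewrite perm_sym perm_to_rem.
Qed.

Lemma split_interpolated_bot G0 D0 : split_interpolated (Bot _ :: G0) D0.
Proof.
move=> Pi Lm pX pY fr.
have : Bot _ \in Pi ++ Gm by rewrite -(perm_mem pX) mem_head.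
rewrite mem_cat => /orP [h|h]; have e := perm_to_rem h.
  by apply: deriv_perml (d_bot L (rem (Bot _) Pi) _) _; perm_solve.
by exfalso; apply: nGD; apply: deriv_perml (d_bot L (rem (Bot _) Gm) Dl) _; perm_solve.
Qed.

Section ModalCases.
Variables (G : grp) (b : form) (Pi Lm : seq form).
Hypotheses (frPi : all fresh Pi) (HOLm : all omega_ok Lm) (HSPi : all (sigmaK_ok G) (nonboxes G
  Pi)).
Hypothesis prem : deriv L (unbox G Pi ++ unbox G Gm) [:: b].

(* If [G] contains no agent but [a], the fresh [Pi] has no box below [G] and [D_K] would
   derive [Gm => Dl] itself; otherwise the disjunct [D_(G\a) A(Gm^G; b)] is derivable. *)
Lemma split_interpolated_DK_Dl : Box G b \in Dl -> deriv L Pi (bigOr disjuncts :: Lm).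
Proof.
move=> hb; have pDl := perm_to_rem hb.
have HODl' : all omega_ok (rem (Box G b) Dl) by move: hD; rewrite (perm_all _ pDl) => /andP [].
case: (boolP (sval G :\ a == set0)) => [/eqP e0|ne0].
  exfalso; apply: nGD.
  have prem0 : deriv L (unbox G Gm) [:: b] by move: prem; rewrite /unbox boxes_within_fresh_nil.
  apply: deriv_perm (d_DK prem0 (boxes_within_sub G Gm) (nonboxes_omega G hG) HODl') _ _.
    by rewrite perm_sym perm_boxes_within.
  by rewrite perm_sym.
pose g' : grp := exist _ (sval G :\ a) ne0.
have eg' : sval g' = sval G :\ a by [].
have eqb := box_within_fresh frPi eg'.
have [_ _ e1] := IHb hb.
have eb : unbox g' Pi = unbox G Pi by rewrite /unbox /boxes_within (eq_in_pmap eqb).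
have d1 : deriv L (unbox g' Pi) [:: J (unbox G Gm) [:: b]].
  by apply: e1; rewrite ?eb cats0 // fresh_unbox.
apply: deriv_bigOrR (Box_disjunct hb eg') _.
have HS' : all (sigmaK_ok g') (nonboxes g' Pi).
  rewrite /nonboxes (eq_in_filter (a2 := fun f => box_within G f == None));
    last by move=> f /eqb ->.
  by apply/allP => f /(allP HSPi); apply: sigmaK_ok_sub; apply: subD1set.
apply: deriv_perml (d_DK d1 (boxes_within_sub g' Pi) HS' HOLm) _.
by rewrite perm_sym perm_boxes_within.
Qed.

(* If no box of [Gm] lies below [G], the premise only uses [Pi] and [D_K] applies within
   [Pi => Lm]; otherwise [g = G :&: agtsl Gm] is a group without [a] and the disjunct
   [~ D_g ~ A(Gm^g; )] is derivable, by [D_K] with the extra box [D_g ~ A(Gm^g; )]. *)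
Lemma split_interpolated_DK_Lm : fresh (Box G b) -> deriv L Pi (bigOr disjuncts :: Box G b :: Lm).
Proof.
rewrite fresh_Box => /andP [aG frb].
case E: (boxes_within G Gm) => [|x U].
  apply: deriv_weakenR.
  have prem0 : deriv L (unbox G Pi) [:: b] by move: prem; rewrite {2}/unbox E cats0.
  apply: deriv_perml (d_DK prem0 (boxes_within_sub G Pi) HSPi HOLm) _.
  by rewrite perm_sym perm_boxes_within.
have hx : x \in boxes_within G Gm by rewrite E mem_head.
have hxG := mem_boxes_within hx; have sxG := allP (boxes_within_sub G Gm) x hx.
have ne : sval G :&: agtsl Gm != set0.
  have /set0Pn [y hy] := svalP x.1.
  by apply/set0Pn; exists y; rewrite in_setI (subsetP sxG _ hy) (subsetP (box_agts hxG) _ hy).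
pose g : grp := exist _ (sval G :&: agtsl Gm) ne.
have hg : sval g \subset agtsl Gm :\ a.
  apply/subsetP => y; rewrite /= in_setI in_setD1 => /andP [yG ->]; rewrite andbT.
  by apply: contraNneq aG => <-.
have eqU : boxes_within g Gm = boxes_within G Gm.
  apply: eq_in_pmap => f; case: f => //= H f hf.
  by rewrite subsetI (box_agts hf) andbT.
have [_ _ e1] := IHg hg.
have d1 : deriv L (unbox G Pi) [:: J (unbox g Gm) [::]; b].
  by apply: e1; rewrite ?all_cat ?fresh_unbox //= ?frb // /unbox eqU.
apply: deriv_bigOrR (diamond_disjunct hg) _; apply: d_Rneg.
set boxes := (g, Neg (J (unbox g Gm) [::])) :: boxes_within G Pi.
have Hb : all (fun x : grp * form => sval x.1 \subset sval G) boxes.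
  by rewrite /= subsetIl boxes_within_sub.
apply: deriv_perml (d_DK (boxes := boxes) (d_Lneg d1) Hb HSPi HOLm) _.
by have := perm_boxes_within G Pi; rewrite /= => h; perm_solve.
Qed.

End ModalCases.

Lemma split_interpolated_DK boxes (G : grp) b Sig Om :
  deriv L (map snd boxes) [:: b] ->
  all (fun x : grp * form => sval x.1 \subset sval G) boxes ->
  all (sigmaK_ok G) Sig -> all omega_ok Om ->
  split_interpolated (Sig ++ map (fun x => Box x.1 x.2) boxes) (Box G b :: Om).
Proof.
move=> prem Hb HS HO Pi Lm pX pY; rewrite all_cat => /andP [frPi frLm].
have prem' : deriv L (unbox G Pi ++ unbox G Gm) [:: b].
  by apply: deriv_perml prem _; rewrite -(unbox_DK HS Hb) -unbox_cat perm_unbox.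
have HSPi : all (sigmaK_ok G) (nonboxes G Pi).
  by apply: nonboxes_sigmaK HS _ Hb => f hf; rewrite (perm_mem pX) mem_cat hf.
have : Box G b \in Dl ++ Lm by rewrite -(perm_mem pY) mem_head.
rewrite mem_cat => /orP [hb|hb].
  have HOLm : all omega_ok Lm.
    have : all omega_ok (Box G b :: Om) by rewrite /= HO.
    by rewrite (perm_all _ pY) all_cat => /andP [].
  exact: split_interpolated_DK_Dl HOLm HSPi prem' hb.
have pLm := perm_to_rem hb.
have HOLm' : all omega_ok (rem (Box G b) Lm).
  have pOm : perm_eq Om (Dl ++ rem (Box G b) Lm) by perm_solve.
  by move: HO; rewrite (perm_all _ pOm) all_cat => /andP [].
have := split_interpolated_DK_Lm frPi HOLm' HSPi prem' (allP frLm _ hb).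
by move/deriv_permr; apply; perm_solve.
Qed.

(* If [c = a], the fresh [Pi] has no box [D_c _] and [D_D] would derive [Gm => Dl]; if [Gm] has
   none, [D_D] applies within [Pi => Lm]; otherwise the disjunct [~ D_c ~ A(Gm^c; )] is
   derivable, by [D_D] with the extra box [D_c ~ A(Gm^c; )]. *)
Lemma split_interpolated_DD c Gm0 Sig Om : L = LKD -> Gm0 <> [::] -> deriv L Gm0 [::] ->
  all (sigmaD_ok c) Sig -> all omega_ok Om ->
  split_interpolated (Sig ++ map (Box (sgrp c)) Gm0) Om.
Proof.
move=> eL nG prem; rewrite (eq_all (sigmaD_okE c)) => HS HO Pi Lm pX pY.
rewrite all_cat => /andP [frPi _].
have pG0 : perm_eq Gm0 (unbox (sgrp c) Pi ++ unbox (sgrp c) Gm).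
  by rewrite -unbox_cat -{1}(unbox_DD Gm0 HS) perm_unbox.
have ne l : perm_eq Gm0 l -> l <> [::].
  by move=> h e; apply: nG; apply/size0nil; rewrite (perm_size h) e.
have HSPi : all (sigmaK_ok (sgrp c)) (nonboxes (sgrp c) Pi).
  by apply: (nonboxes_sigmaD (Gm := Gm0) HS) => f hf; rewrite (perm_mem pX) mem_cat hf.
have [HODl HOLm] : all omega_ok Dl /\ all omega_ok Lm.
  by apply/andP; rewrite -all_cat -(perm_all _ pY).
case: (c =P a) => [ca|nca].
  have e : unbox (sgrp c) Pi = [::].
    by rewrite /unbox boxes_within_fresh_nil //= ca setDv.
  exfalso; apply: nGD; rewrite e /= in pG0.
  have HSGm := nonboxes_omega (sgrp c) hG.
  apply: deriv_perml (deriv_DD eL (ne _ pG0) (deriv_perml prem pG0) HSGm HODl) _.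
  by rewrite perm_sym perm_boxes_sgrp.
case E: (unbox (sgrp c) Gm) pG0 => [|x U] pG0.
  rewrite cats0 in pG0; apply: deriv_weakenR.
  apply: deriv_perml (deriv_DD eL (ne _ pG0) (deriv_perml prem pG0) HSPi HOLm) _.
  by rewrite perm_sym perm_boxes_sgrp.
have hxG : Box (sgrp c) x \in Gm.
  have : (sgrp c, x) \in boxes_within (sgrp c) Gm by rewrite boxes_within_sgrp E mem_head.
  exact: mem_boxes_within.
have hg : sval (sgrp c) \subset agtsl Gm :\ a.
  rewrite sub1set in_setD1 (subsetP (box_agts hxG)) ?set11 // andbT.
  by apply/eqP.
have [_ _ e1] := IHg hg.
have d1 : deriv L (unbox (sgrp c) Pi) [:: J (unbox (sgrp c) Gm) [::]].
  by apply: e1; rewrite cats0 ?fresh_unbox // E; apply: deriv_perml prem pG0.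
apply: deriv_bigOrR (diamond_disjunct hg) _; apply: d_Rneg.
apply: deriv_perml (deriv_DD (Gm := Neg (J (unbox (sgrp c) Gm) [::]) :: unbox (sgrp c) Pi)
                      eL _ (d_Lneg d1) HSPi HOLm) _; first by [].
by have := perm_boxes_sgrp c Pi; rewrite /= => h; perm_solve.
Qed.

Lemma deriv_split_interpolated X Y : deriv L X Y -> split_interpolated X Y.
Proof.
elim=> {X Y}.
- move=> G D G' D' _ IH /PermutationP pG /PermutationP pD Pi Lm pX pY.
  by apply: IH; perm_solve.
- exact: split_interpolated_id.
- exact: split_interpolated_bot.
- move=> G D a1 a2 _ IH1 _ IH2; apply: split_interpolated_rpremises => // l r.
  by rewrite !inE => /orP [] /eqP [-> ->].
- move=> G D a1 a2 _ IH; apply: split_interpolated_lpremises => // l r.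
  by rewrite !inE => /eqP [-> ->].
- move=> G D a1 a2 _ IH; apply: split_interpolated_rpremises => // l r.
  by rewrite !inE => /eqP [-> ->].
- move=> G D a1 a2 _ IH1 _ IH2; apply: split_interpolated_lpremises => // l r.
  by rewrite !inE => /orP [] /eqP [-> ->].
- move=> G D a1 a2 _ IH; apply: split_interpolated_rpremises => // l r.
  by rewrite !inE => /eqP [-> ->].
- move=> G D a1 a2 _ IH1 _ IH2; apply: split_interpolated_lpremises => // l r.
  by rewrite !inE => /orP [] /eqP [-> ->].
- move=> G D a1 _ IH; apply: split_interpolated_rpremises => // l r.
  by rewrite !inE => /eqP [-> ->].
- move=> G D a1 _ IH; apply: split_interpolated_lpremises => // l r.
  by rewrite !inE => /eqP [-> ->].
- by move=> boxes G b Sig Om prem _ Hb HS HO; apply: split_interpolated_DK.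
- by move=> c Gm0 Sig Om eL nG prem _ HS HO; apply: split_interpolated_DD.
Qed.

Lemma irreducible_interpolant : uniform_interpolant Gm Dl (bigOr disjuncts).
Proof.
split.
- by apply: in_lang_bigOr => x; apply: in_lang_disjunct.
- by apply: deriv_perml (deriv_bigOrL deriv_disjunct) _; perm_solve.
- by move=> Pi Lm fr d; apply: (deriv_split_interpolated d).
Qed.

End Irreducible.

Lemma uniform_interpolant_perm Gm Dl Gm' Dl' F : perm_eq Gm Gm' -> perm_eq Dl Dl' ->
  uniform_interpolant Gm' Dl' F -> uniform_interpolant Gm Dl F.
Proof.
move=> pG pD [i d e]; split.
- by apply: in_lang_mono i; apply: lang_sub_perm; perm_solve.
- by apply: deriv_perm d _ _; perm_solve.
- by move=> Pi Lm fr d'; apply: e fr _; apply: deriv_perm d' _ _; perm_solve.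
Qed.

(* The fuel [n] only has to exceed the size of the sequent. Derivability of an irreducible
   sequent is decided classically, so the interpolant is defined but not computed. *)
Fixpoint interp (n : nat) (Gm Dl : seq form) : form :=
  if n is n'.+1 then
    if pick_compound Gm is Some (P, Gm') then
      bigAnd [seq interp n' (lr.1 ++ Gm') (lr.2 ++ Dl) | lr <- lpremises P]
    else if pick_compound Dl is Some (P, Dl') then
      bigAnd [seq interp n' (lr.1 ++ Gm) (lr.2 ++ Dl') | lr <- rpremises P]
    else if excluded_middle_informative (deriv L Gm Dl) then Top
    else bigOr (irreducible_disjuncts (interp n') Gm Dl)
  else Bot _.

Lemma interp_interpolant n Gm Dl :
  msize Gm + msize Dl < n -> uniform_interpolant Gm Dl (interp n Gm Dl).
Proof.
elim: n Gm Dl => [//|n IH] Gm Dl hn /=.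
case EG: (pick_compound Gm) => [[P Gm']|].
  have [pG cP] := pick_compound_some EG.
  apply: (uniform_interpolant_perm pG (perm_refl _)).
  apply: (lpremises_interpolant cP) => l r lr; apply: IH.
  have := msize_premises (P := P) (l := l) (r := r); rewrite mem_cat lr => /(_ isT).
  by move: hn; rewrite !msize_cat (msize_perm pG) /msize /=; lia.
case ED: (pick_compound Dl) => [[P Dl']|].
  have [pD cP] := pick_compound_some ED.
  apply: (uniform_interpolant_perm (perm_refl _) pD).
  apply: (rpremises_interpolant cP) => l r lr; apply: IH.
  have := msize_premises (P := P) (l := l) (r := r); rewrite mem_cat lr orbT => /(_ isT).
  by move: hn; rewrite !msize_cat (msize_perm pD) /msize /=; lia.
have hG := pick_compound_none EG; have hD := pick_compound_none ED.
case: excluded_middle_informative => [dGD|nGD].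
  split; first exact: in_lang_Top.
    by apply: deriv_perml (deriv_weakenL Top dGD) _; perm_solve.
  by move=> Pi Lm _ _; apply/d_Rneg/d_bot.
apply: irreducible_interpolant => // [g hg|G b hb]; apply: IH.
  have /set0Pn [x /(subsetP hg)] := svalP g; rewrite in_setD1 => /andP [_ xG].
  have szG : 0 < size Gm by case: (Gm) xG => //; rewrite /agtsl big_nil in_set0.
  by have := msize_unbox g Gm; move: hn; rewrite /msize /=; lia.
have := msize_unbox G Gm; have := msize_mem hb.
by move: hn; rewrite /msize /=; lia.
Qed.

End Interpolation.

End Formulas.

Theorem theorem5p5 (Ag : finType) (HAg : 0 < #|Ag|) (L : logic)
    (Gm Dl : seq (form Ag)) (p : nat) (a : Ag) :
  exists F : form Ag,
    [/\ {subset vars F <= [seq q <- varsl (Gm ++ Dl) | q != p]},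
        agts F \subset agtsl (Gm ++ Dl) :\ a,
        deriv L (Gm ++ [:: F]) Dl &
        forall Pi Lm : seq (form Ag),
          p \notin varsl (Pi ++ Lm) ->
          a \notin agtsl (Pi ++ Lm) ->
          deriv L (Pi ++ Gm) (Dl ++ Lm) ->
          deriv L Pi (F :: Lm)].
Proof.
have [/andP [vF aF] dF eF] := interp_interpolant L p a (ltnSn (msize Gm + msize Dl)).
eexists; split; [|exact: aF|exact: dF|].
- by move=> q /(allP vF); rewrite mem_filter andbC.
- by move=> Pi Lm hp ha; apply: eF; rewrite -fresh_all hp ha.
Qed.
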